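(* Let $m,n\ge0$ be integers with $m+n$ even. A permutation $x=(x_1x_2\cdots x_{m+n})$ of $[m+n]$ is an alternating $\mathcal B_{m,n}$-permutation if and only if $x\in\mathrm{Alt}_{\mathrm{Hoch}(m,n)}$.
   Context: For integers $i\le j$, $[i,j]=\{\ell\in\mathbb Z: i\le\ell\le j\}$ and $[N]=[1,N]$. $\mathcal B_{m,n}$ is the collection of nonempty subsets $I\subseteq[m+n]$ such that whenever $|I|\ge2$, $I\cap[m+1,m+n]$ is either $\emptyset$ or $[m+r,m+n]$ for some $1\le r\le n$ (a building set on $[m+n]$). For a building set $\mathcal B$ on $S$ (collection of nonempty subsets of $S$ containing all singletons, closed under unions of intersecting members; its connected components are its inclusion-maximal members; $\mathcal B|_I=\{J\in\mathcal B:J\subseteq I\}$) with $|S|=N$, a $\mathcal B$-permutation is a sequence $(x_1\cdots x_N)$ listing each element of $S$ once such that for each $i$, $x_i$ and $\max\{x_1,\dots,x_i\}$ lie in the same connected component of $\mathcal B|_{\{x_1,\dots,x_i\}}$; it is alternating if $x_1>x_2<x_3>\cdots$. $\mathrm{Alt}_{\mathrm{Hoch}(m,n)}$ is the set of alternating permutations $(x_1\cdots x_{m+n})$ of $[m+n]$ such that for all $i,j$: $m+n\ge x_i>x_j\ge m+1$ implies $i<j$. *)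

From mathcomp Require Import all_boot finmap.
Set Implicit Arguments. Unset Strict Implicit. Unset Printing Implicit Defensive.
Open Scope fset_scope.

Definition interval (i j : nat) : {fset nat} := [fset k in iota i (j.+1 - i)].

Definition B_mn (m n : nat) (I : {fset nat}) : bool :=
  [&& I != fset0, I `<=` interval 1 (m + n) &
     (2 <= #|` I|) ==>
       ((I `&` interval (m + 1) (m + n) == fset0) ||
        has (fun r => I `&` interval (m + 1) (m + n) == interval (m + r) (m + n))
            (iota 1 n))].

(* J is a connected component of B|_S: an inclusion-maximal member of B|_S. *)
Definition is_component (B : {fset nat} -> bool) (S J : {fset nat}) : Prop :=
  [/\ B J, J `<=` S &
      forall K : {fset nat}, B K -> K `<=` S -> J `<=` K -> K = J].

Definition same_component (B : {fset nat} -> bool) (S : {fset nat}) (a b : nat) : Prop :=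
  exists J, is_component B S J /\ a \in J /\ b \in J.

(* x = (x_1 ... x_N) (stored 0-indexed) is a B-permutation of [N]. *)
Definition is_B_perm (B : {fset nat} -> bool) (N : nat) (x : seq nat) : Prop :=
  perm_eq x (iota 1 N) /\
  forall i, i < size x ->
    same_component B [fset y in take i.+1 x] (nth 0 x i) (\max_(y <- take i.+1 x) y).

(* x_1 > x_2 < x_3 > ... ; 0-indexed position i even means x_{i+1} with i+1 odd. *)
Definition alternating (x : seq nat) : bool :=
  all (fun i => if ~~ odd i then nth 0 x i.+1 < nth 0 x i else nth 0 x i < nth 0 x i.+1)
      (iota 0 (size x).-1).

Definition Alt_Hoch (m n : nat) (x : seq nat) : Prop :=
  [/\ perm_eq x (iota 1 (m + n)), alternating x &
      forall i j, i < size x -> j < size x ->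
        m + n >= nth 0 x i -> nth 0 x i > nth 0 x j -> nth 0 x j >= m + 1 -> i < j].

From mathcomp Require Import all_boot finmap zify.

Local Open Scope nat_scope.

(* Call a set of values upper-closed when, together with any [k > m], it
   contains every value in [[k, m + n]].  A subset of [[m + n]] with at least
   two elements lies in [B_{m,n}] exactly when it is upper-closed, and the
   condition defining Alt_Hoch says exactly that every prefix set
   [{x_1, ..., x_t}] is upper-closed.

   If all prefixes are upper-closed, each prefix set lies in [B_{m,n}], hence
   is its own unique component, and [x] is a [B_{m,n}]-permutation.
   Conversely, let [x] be an alternating [B_{m,n}]-permutation and let
   [x_t > m] join an upper-closed prefix.  Then [m + n] occurs among
   [x_1, ..., x_t]: either an earlier entry exceeds [m], or [x_t] is a peak
   (a valley has a larger predecessor), so [t < m + n] as [m + n] is even, and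
   the component joining [x_{t+1} < x_t] to the current maximum reaches
   [m + n].  So [x_t] lies in the component of [m + n], which then contains
   [[x_t, m + n]]. *)

Definition up_closed (m n : nat) (s : seq nat) : Prop :=
  forall k k' : nat, k \in s -> m < k -> k < k' <= m + n -> k' \in s.

Definition upper_decreasing (m n : nat) (x : seq nat) : Prop :=
  forall i j, i < size x -> j < size x ->
    m + n >= nth 0 x i -> nth 0 x i > nth 0 x j -> nth 0 x j >= m + 1 -> i < j.

Lemma mem_interval i j k : (k \in interval i j) = (i <= k <= j).
Proof. by rewrite /interval inE mem_iota; apply/idP/idP; lia. Qed.

Lemma bigmax_seq_mem (s : seq nat) : s != [::] -> \max_(y <- s) y \in s.
Proof.
elim: s => // a [|b s] IH _; first by rewrite big_seq1 mem_seq1.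
rewrite big_cons inE /maxn; case: ltnP => _; last by rewrite eqxx.
by rewrite IH ?orbT.
Qed.

Lemma mem_take_nth {T : eqType} (x0 : T) {s : seq T} {t i} :
  i < t -> i < size s -> nth x0 s i \in take t s.
Proof.
by move=> lt_it lt_is; rewrite -(nth_take x0 lt_it) mem_nth // size_take; case: ifP.
Qed.

Lemma B_mn_upper_segment {m n J a b c} k :
  B_mn m n J -> a \in J -> b \in J -> a != b ->
  c \in J -> m < c -> c <= k <= m + n -> k \in J.
Proof.
case/and3P=> _ _ + aJ bJ neq_ab cJ gt_cm le_ck.
have two_le : 2 <= #|` J|.
  have : [fset a; b] `<=` J by apply/fsubsetP => z; rewrite !inE => /orP[]/eqP->.
  by move/fsubset_leq_card; rewrite cardfs2 neq_ab.
have cJup : c \in J `&` interval (m + 1) (m + n).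
  by rewrite inE cJ mem_interval; case/andP: le_ck; lia.
move/implyP/(_ two_le)/orP => [/eqP E|/hasP[r _ /eqP E]]; first by rewrite E in cJup.
have kJup : k \in J `&` interval (m + 1) (m + n).
  by move: cJup; rewrite E !mem_interval; lia.
by rewrite inE in kJup; case/andP: kJup.
Qed.

Lemma same_component_upper_segment {m n S a b} c k :
  same_component (B_mn m n) S a b -> a != b -> c \in [:: a; b] ->
  m < c -> c <= k <= m + n -> k \in S.
Proof.
case=> J [[BJ /fsubsetP JS _] [aJ bJ]] neq_ab c_ab gt_cm le_ck.
apply/JS/(B_mn_upper_segment k BJ aJ bJ neq_ab _ gt_cm le_ck).
by case/predU1P: c_ab => [->|/predU1P[->|]].
Qed.

Lemma B_mn_of_up_closed m n (s : seq nat) :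
  s != [::] -> all (fun y => 0 < y <= m + n) s -> up_closed m n s ->
  B_mn m n [fset y in s].
Proof.
move=> s_neq0 /allP s_range s_up; apply/and3P; split.
- case: s s_neq0 {s_range s_up} => // a s _.
  by apply/eqP => /fsetP /(_ a); rewrite !inE eqxx.
- by apply/fsubsetP => z; rewrite inE mem_interval => /s_range; lia.
apply/implyP => _; apply/orP.
have [has_up|no_up] := boolP (has (fun k => m < k) s); last first.
  left; apply/eqP/fsetP => z; rewrite in_fsetI inE mem_interval inE.
  by apply/negbTE/andP => -[zs ?]; move/hasPn: no_up => /(_ z zs); lia.
have ex_up : exists l, (l \in s) && (m < l).
  by case/hasP: has_up => l ? ?; exists l; apply/andP.
case: (ex_minnP ex_up) => l /andP[ls gt_lm] l_min; right; apply/hasP.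
exists (l - m); first by rewrite mem_iota; have := s_range _ ls; lia.
apply/eqP/fsetP => z; rewrite in_fsetI inE !mem_interval; apply/andP/idP.
- by case=> zs ?; have := l_min z; rewrite zs /=; lia.
- move=> le_lz; split; last by lia.
  by case: (ltngtP l z) => [lt_lz|?|<-] //; [apply: (s_up l) => //; lia | lia].
Qed.

Lemma alternating_nth {x i} : alternating x -> i.+1 < size x ->
  if odd i then nth 0 x i < nth 0 x i.+1 else nth 0 x i.+1 < nth 0 x i.
Proof.
move=> /allP x_alt lt_i1x.
have /x_alt : i \in iota 0 (size x).-1 by rewrite mem_iota; lia.
by case: odd.
Qed.

Lemma is_component_self (B : {fset nat} -> bool) S : B S -> is_component B S S.
Proof. by move=> BS; split=> // K _ KS SK; apply/eqP; rewrite eqEfsubset KS SK. Qed.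

Section Prefixes.

Variables (m n : nat) (x : seq nat).
Hypothesis x_perm : perm_eq x (iota 1 (m + n)).

Let x_uniq : uniq x.
Proof. by rewrite (perm_uniq x_perm) iota_uniq. Qed.

Let mem_x k : (k \in x) = (0 < k <= m + n).
Proof. by rewrite (perm_mem x_perm) mem_iota; apply/idP/idP; lia. Qed.

Let mem_take_x {t k} : k \in take t x -> 0 < k <= m + n.
Proof. by move/mem_take; rewrite mem_x. Qed.

Let index_lt_of_mem_take {t i} : i < size x -> nth 0 x i \in take t x -> i < t.
Proof. by move=> lt_ix /index_ltn; rewrite index_uniq. Qed.

Lemma up_closed_prefix_of_upper_decreasing :
  upper_decreasing m n x -> forall t, up_closed m n (take t x).
Proof.
move=> x_dec t k k' kt gt_km /andP[lt_kk' le_k'N].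
have kx := mem_take kt.
have k'x : k' \in x by rewrite mem_x le_k'N andbT; lia.
have lt_kx : index k x < size x by rewrite index_mem.
have lt_k'x : index k' x < size x by rewrite index_mem.
rewrite -(nth_index 0 k'x); apply: mem_take_nth => //.
apply: (ltn_trans (x_dec _ _ lt_k'x lt_kx _ _ _)); rewrite ?nth_index //; try lia.
by apply: index_lt_of_mem_take; rewrite ?nth_index.
Qed.

Lemma upper_decreasing_of_up_closed_prefix :
  (forall t, up_closed m n (take t x)) -> upper_decreasing m n x.
Proof.
move=> x_up i j lt_ix lt_jx _ lt_ji gt_jm.
have xi_prefix : nth 0 x i \in take j.+1 x.
  apply: (x_up j.+1 (nth 0 x j)); rewrite ?mem_take_nth //; try lia.
  by rewrite lt_ji /=; move: (mem_nth 0 lt_ix); rewrite mem_x => /andP[].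
move: (index_lt_of_mem_take lt_ix xi_prefix); rewrite ltnS leq_eqVlt => /predU1P[eq_ij|//].
by rewrite eq_ij ltnn in lt_ji.
Qed.

Lemma B_perm_of_up_closed_prefix :
  (forall t, up_closed m n (take t x)) -> is_B_perm (B_mn m n) (m + n) x.
Proof.
move=> x_up; split=> // i lt_ix.
have prefix_neq0 : take i.+1 x != [::] by rewrite (take_nth 0 lt_ix); case: (take i x).
exists [fset y in take i.+1 x]; split.
  by apply/is_component_self/B_mn_of_up_closed => //; apply/allP => y /mem_take_x.
by rewrite !inE mem_take_nth // bigmax_seq_mem.
Qed.

Section AlternatingBPermutation.

Hypothesis x_B : is_B_perm (B_mn m n) (m + n) x.
Hypothesis x_alt : alternating x.
Hypothesis even_mn : ~~ odd (m + n).

Let size_x : size x = m + n.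
Proof. by rewrite (perm_size x_perm) size_iota. Qed.

Let bigmax_prefix_le t : \max_(y <- take t x) y <= m + n.
Proof. by apply/bigmax_leqP_seq => y /mem_take_x /andP[]. Qed.

Lemma top_in_prefix_of_descent {i} :
  i.+1 < size x -> nth 0 x i.+1 < nth 0 x i -> m < nth 0 x i -> m + n \in take i.+2 x.
Proof.
move=> lt_i1x desc gt_im; set M := \max_(y <- take i.+2 x) y.
have le_iM : nth 0 x i <= M by apply: leq_bigmax_seq; rewrite // mem_take_nth // ltnW.
have neq_M : nth 0 x i.+1 != M by rewrite neq_ltn (leq_trans desc le_iM).
suff : m + n \in [fset y in take i.+2 x] by rewrite inE.
apply: (same_component_upper_segment M _ (x_B.2 _ lt_i1x) neq_M).
- by rewrite mem_seq2 eqxx orbT.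
- exact: leq_trans gt_im le_iM.
- by rewrite bigmax_prefix_le leqnn.
Qed.

Lemma top_in_prefix {i} :
  i < size x -> up_closed m n (take i x) -> m < nth 0 x i -> m + n \in take i.+1 x.
Proof.
move=> lt_ix prefix_up gt_im.
have [/hasP[l ls gt_lm]|no_up] := boolP (has (fun k => m < k) (take i x)).
  rewrite (take_nth 0 lt_ix) mem_rcons inE; apply/orP; right.
  have := mem_take_x ls; case: (ltngtP l (m + n)) => [lt_lN|?|<-] //; last lia.
  by move=> _; apply: (prefix_up l) => //; rewrite lt_lN leqnn.
have [odd_i|even_i] := boolP (odd i).
  case: i odd_i lt_ix gt_im no_up {prefix_up} => // i /= even_i lt_i1x gt_i1m.
  have := alternating_nth x_alt lt_i1x; rewrite (negbTE even_i) => desc.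
  move/hasPn/(_ _ (mem_take_nth 0 (ltnSn i) (ltnW lt_i1x))).
  by rewrite /= (ltn_trans gt_i1m desc).
have lt_i1x : i.+1 < size x.
  rewrite ltn_neqAle lt_ix andbT; apply: contraTneq even_mn.
  by rewrite -size_x => <- /=; rewrite even_i.
have desc := alternating_nth x_alt lt_i1x; rewrite (negbTE even_i) in desc.
have := top_in_prefix_of_descent lt_i1x desc gt_im.
rewrite (take_nth 0 lt_i1x) mem_rcons inE => /predU1P[top_eq|//].
have := mem_take_x (mem_take_nth 0 (ltnSn i) lt_ix).
by rewrite top_eq => /andP[_]; rewrite leqNgt desc.
Qed.

Lemma up_closed_prefix_of_B_perm t : up_closed m n (take t x).
Proof.
elim: t => [|i prefix_up]; first by move=> k k'; rewrite take0.
have [lt_ix|le_xi] := ltnP i (size x); last first.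
  by rewrite !take_oversize ?(leqW le_xi) // in prefix_up *.
rewrite (take_nth 0 lt_ix) => k k'.
rewrite mem_rcons inE => /predU1P[->{k}|ks]; last first.
  by move=> gt_km lt_kk'; rewrite mem_rcons inE (prefix_up k k' ks gt_km lt_kk') orbT.
move=> gt_im /andP[lt_ik' le_k'N].
have top := top_in_prefix lt_ix prefix_up gt_im.
have max_top : \max_(y <- take i.+1 x) y = m + n.
  by apply/eqP; rewrite eqn_leq bigmax_prefix_le; apply: leq_bigmax_seq.
have neq_top : nth 0 x i != m + n by rewrite neq_ltn (leq_trans lt_ik').
suff : k' \in [fset y in take i.+1 x] by rewrite inE (take_nth 0 lt_ix).
apply: (same_component_upper_segment (nth 0 x i) _ (x_B.2 i lt_ix)) => //.
- by rewrite max_top.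
- by rewrite mem_seq2 eqxx.
- by rewrite (ltnW lt_ik').
Qed.

End AlternatingBPermutation.

End Prefixes.

Theorem proposition6p1 (m n : nat) : ~~ odd (m + n) ->
  forall x : seq nat, perm_eq x (iota 1 (m + n)) ->
    ((is_B_perm (B_mn m n) (m + n) x /\ alternating x) <-> Alt_Hoch m n x).
Proof.
move=> even_mn x x_perm; split.
- case=> x_B x_alt; split=> //; apply: upper_decreasing_of_up_closed_prefix => //.
  exact: up_closed_prefix_of_B_perm.
- case=> _ x_alt x_dec; split=> //; apply: B_perm_of_up_closed_prefix => //.
  exact: up_closed_prefix_of_upper_decreasing.
Qed.
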